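(* In the quantum number-in-hand network model on $k$-node graphs, there is a quantum protocol with communication cost $O(k\log^2 k)$ qubits which, with probability at least $2/3$, correctly decides whether the input graph $G$ contains no induced subgraph isomorphic to the path $P_3$ on three nodes (two edges).
   Context: Quantum number-in-hand (NIH) network model: the input is an undirected graph $G=(V,E)$ without self-loops on $V=[k]$; player $v\in[k]$ receives only $\nu_v\in\{0,1\}^k$, the characteristic vector of its neighborhood $N(v)$; each player sends one quantum message depending only on its own input (no shared randomness or entanglement) to a referee, who outputs the answer. The cost is the total number of qubits sent. *)

From HB Require Import structures.
From mathcomp Require Import all_boot all_algebra.
From mathcomp Require Import reals complex.
Set Implicit Arguments. Unset Strict Implicit. Unset Printing Implicit Defensive.
Import GRing.Theory Num.Theory.
Local Open Scope ring_scope.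

(* Complex numbers: C = R[i] for a real field R : realType (any realType is
   isomorphic to the reals). Operators on a finite-dimensional Hilbert space
   with orthonormal basis indexed by a finType T are functions T -> T -> R[i]
   (matrix entries <i|A|j> = A i j). *)

Definition hermitian (R : realType) (T : finType) (A : T -> T -> R[i]) : Prop :=
  forall i j, A j i = (A i j)^*.

Definition psd (R : realType) (T : finType) (A : T -> T -> R[i]) : Prop :=
  forall x : T -> R[i], 0 <= \sum_i \sum_j (x i)^* * A i j * x j.

Definition density (R : realType) (T : finType) (A : T -> T -> R[i]) : Prop :=
  [/\ hermitian A, psd A & \sum_i A i i = 1].

(* measurement effect 0 <= E <= I (the "accept" element of a two-outcome POVM
   {E, I - E}) *)
Definition effect (R : realType) (T : finType) (E : T -> T -> R[i]) : Prop :=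
  [/\ hermitian E, psd E & psd (fun i j => (i == j)%:R - E i j)].

Definition tr_prod (R : realType) (T : finType) (E rho : T -> T -> R[i]) : R[i] :=
  \sum_i \sum_j E i j * rho j i.

Definition simple_graph (k : nat) (adj : 'I_k -> 'I_k -> bool) : Prop :=
  (forall u v, adj u v = adj v u) /\ (forall v, ~~ adj v v).

(* the input of player v : characteristic vector of N(v) *)
Definition nbhd_vec (k : nat) (adj : 'I_k -> 'I_k -> bool) (v : 'I_k)
  : {ffun 'I_k -> bool} := [ffun u => adj v u].

Definition has_induced_P3 (k : nat) (adj : 'I_k -> 'I_k -> bool) : Prop :=
  exists a b c : 'I_k,
    [/\ a != b, b != c, a != c & [&& adj a b, adj b c & ~~ adj a c]].

(* Quantum NIH protocol on k players: player v sends msg_qubits v qubits, in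
   the (mixed) state msg v nu, which depends only on v and its input nu; no
   shared randomness / entanglement, so the referee receives the tensor
   product of the messages; the referee then performs a two-outcome
   measurement with accepting effect [accept] (this is fully general). *)
Record qnih_protocol (R : realType) (k : nat) := QNIH {
  msg_qubits : 'I_k -> nat;
  msg : forall v : 'I_k, {ffun 'I_k -> bool} ->
          'I_(2 ^ msg_qubits v) -> 'I_(2 ^ msg_qubits v) -> R[i];
  accept : {dffun forall v : 'I_k, 'I_(2 ^ msg_qubits v)} ->
           {dffun forall v : 'I_k, 'I_(2 ^ msg_qubits v)} -> R[i]
}.
Arguments msg_qubits {R k} _ _.
Arguments msg {R k} _ _ _ _ _.
Arguments accept {R k} _ _ _.

Definition qnih_valid (R : realType) (k : nat) (P : qnih_protocol R k) : Prop :=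
  (forall v nu, density (msg P v nu)) /\ effect (accept P).

Definition qnih_cost (R : realType) (k : nat) (P : qnih_protocol R k) : nat :=
  \sum_(v < k) msg_qubits P v.

Definition qnih_joint (R : realType) (k : nat) (P : qnih_protocol R k)
  (adj : 'I_k -> 'I_k -> bool) :
  {dffun forall v : 'I_k, 'I_(2 ^ msg_qubits P v)} ->
  {dffun forall v : 'I_k, 'I_(2 ^ msg_qubits P v)} -> R[i] :=
  fun b b' => \prod_(v < k) msg P v (nbhd_vec adj v) (b v) (b' v).

Definition qnih_accept_prob (R : realType) (k : nat) (P : qnih_protocol R k)
  (adj : 'I_k -> 'I_k -> bool) : R[i] :=
  tr_prod (accept P) (@qnih_joint R k P adj).

Definition qnih_decides (R : realType) (k : nat) (P : qnih_protocol R k)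
  (Q : ('I_k -> 'I_k -> bool) -> Prop) : Prop :=
  forall adj, simple_graph adj ->
    (Q adj -> 2%:R / 3%:R <= qnih_accept_prob P adj) /\
    (~ Q adj -> 1 - qnih_accept_prob P adj >= 2%:R / 3%:R).

From HB Require Import structures.
From mathcomp Require Import all_boot all_order all_algebra all_field.
From mathcomp Require Import reals complex.
From mathcomp Require Import ring lra zify.
Import Order.TTheory GRing.Theory Num.Theory.
Local Open Scope ring_scope.

(* A graph is P3-free iff its closed-neighbourhood relation (u = v or uv is an
   edge) is transitive, i.e. iff it is a disjoint union of cliques.  Player v
   names its closed neighbourhood N[v] by a leader of N[v], written with
   O(log k) bits, and sends the fingerprint amp * sum_x |label, x, p(x)> of
   N[v], where p = sum_(j in N[v]) X^j over a field with 4^r >= 2k elements.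
   For every labelling c of the vertices, let h_c be the tensor product in which
   vertex w holds the fingerprint of its label class under c; these vectors are
   orthonormal and the referee accepts on their span.  Only the labelling sent
   by the players contributes, so the acceptance probability is the square of
   the product over w of the overlaps between N[w] and the label class of w.
   In a P3-free graph these sets coincide and the referee always accepts.
   Otherwise they differ for some w, and as distinct polynomials of degree < k
   agree on fewer than k points, that overlap is at most k / |F| <= 1/2. *)

Set Implicit Arguments. Unset Strict Implicit. Unset Printing Implicit Defensive.

Local Notation "x %:C" := (real_complex _ x).

Lemma sum_indicator_eq (R : nzSemiRingType) (T : finType) (a b : T) :
  \sum_t ((t == a)%:R * (t == b)%:R : R) = (a == b)%:R.
Proof.
by rewrite (bigD1 a) //= eqxx mul1r big1 ?addr0 // => t /negbTE ->; rewrite mul0r.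
Qed.

Section RealOperators.
Variable R : realType.
Local Notation C := R[i].

Definition dotr (T : finType) (f g : T -> R) : R := \sum_t f t * g t.

Definition orthonormal (I T : finType) (g : I -> T -> R) : Prop :=
  forall c c', dotr (g c) (g c') = (c == c')%:R.

Definition ketbra (T : finType) (f : T -> R) : T -> T -> C :=
  fun i j => (f i * f j)%:C.

Definition projector (I T : finType) (g : I -> T -> R) : T -> T -> C :=
  fun i j => \sum_c ketbra (g c) i j.

Definition qform (T : finType) (A : T -> T -> C) (x : T -> C) : C :=
  \sum_i \sum_j (x i)^* * A i j * x j.

Definition coord (T : finType) (f : T -> R) (x : T -> C) : C :=
  \sum_t (f t)%:C * x t.

Lemma conj_real (r : R) : Num.conj r%:C = r%:C.
Proof. exact: conjc_real. Qed.

Lemma qform_ketbra (T : finType) (f : T -> R) x :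
  qform (ketbra f) x = (coord f x)^* * coord f x.
Proof.
rewrite /qform /coord rmorph_sum mulr_suml; apply: eq_bigr => i _.
rewrite mulr_sumr; apply: eq_bigr => j _.
by rewrite /ketbra !rmorphM /= conj_real; ring.
Qed.

Lemma qform_sum (I T : finType) (A : I -> T -> T -> C) x :
  qform (fun i j => \sum_c A c i j) x = \sum_c qform (A c) x.
Proof.
rewrite /qform; under eq_bigr do under eq_bigr do rewrite mulr_sumr mulr_suml.
by rewrite [RHS]exchange_big; apply: eq_bigr => i _; rewrite [RHS]exchange_big.
Qed.

Lemma qform_projector (I T : finType) (g : I -> T -> R) x :
  qform (projector g) x = \sum_c (coord (g c) x)^* * coord (g c) x.
Proof. by rewrite qform_sum; apply: eq_bigr => c _; rewrite qform_ketbra. Qed.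

Lemma qform_id (T : finType) (x : T -> C) :
  qform (fun i j => (i == j)%:R) x = \sum_t (x t)^* * x t.
Proof.
apply: eq_bigr => i _; rewrite (bigD1 i) //= eqxx mulr1 big1 ?addr0 // => j.
by rewrite eq_sym => /negbTE ->; rewrite mulr0 mul0r.
Qed.

Lemma qformB (T : finType) (A B : T -> T -> C) x :
  qform (fun i j => A i j - B i j) x = qform A x - qform B x.
Proof.
rewrite /qform -sumrB; apply: eq_bigr => i _; rewrite -sumrB.
by apply: eq_bigr => j _; ring.
Qed.

Definition project (I T : finType) (g : I -> T -> R) (x : T -> C) : T -> C :=
  fun t => \sum_c coord (g c) x * (g c t)%:C.

Lemma sum_conj_mul_project (I T : finType) (g : I -> T -> R) (x z : T -> C) :
  \sum_t (z t)^* * project g x t = \sum_c (coord (g c) z)^* * coord (g c) x.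
Proof.
under eq_bigr do rewrite mulr_sumr.
rewrite exchange_big; apply: eq_bigr => c _.
rewrite /coord rmorph_sum mulr_suml; apply: eq_bigr => t _.
by rewrite rmorphM /= conj_real; ring.
Qed.

Lemma coord_project (I T : finType) (g : I -> T -> R) x c :
  orthonormal g -> coord (g c) (project g x) = coord (g c) x.
Proof.
move=> g_on.
have coord_term c' : \sum_t (g c t)%:C * (coord (g c') x * (g c' t)%:C) =
    coord (g c') x * (c == c')%:R.
  rewrite -(rmorph_nat (real_complex R)) -(g_on c c') /dotr rmorph_sum mulr_sumr.
  by apply: eq_bigr => t _; rewrite rmorphM /=; ring.
rewrite {1}/coord /project; under eq_bigr do rewrite mulr_sumr.
rewrite exchange_big (bigD1 c) //= coord_term eqxx mulr1 big1 ?addr0 // => c'.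
by rewrite coord_term eq_sym => /negbTE ->; rewrite mulr0.
Qed.

Lemma qform_id_sub_projector (I T : finType) (g : I -> T -> R) x :
  orthonormal g ->
  qform (fun i j => (i == j)%:R - projector g i j) x =
  \sum_t (x t - project g x t)^* * (x t - project g x t).
Proof.
move=> on; rewrite qformB qform_id qform_projector.
set b := \sum_c (coord _ x)^* * _.
have xp : \sum_t (x t)^* * project g x t = b by rewrite sum_conj_mul_project.
have pp : \sum_t (project g x t)^* * project g x t = b.
  by rewrite sum_conj_mul_project; apply: eq_bigr => c _; rewrite coord_project.
have px : \sum_t (project g x t)^* * x t = b.
  have bC : b^* = b.
    rewrite /b rmorph_sum; apply: eq_bigr => c _.
    by rewrite rmorphM /= conjCK mulrC.
  rewrite -bC -xp rmorph_sum; apply: eq_bigr => t _.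
  by rewrite rmorphM /= conjCK mulrC.
have -> : \sum_t (x t - project g x t)^* * (x t - project g x t) =
    \sum_t (x t)^* * x t - \sum_t (x t)^* * project g x t
    - \sum_t (project g x t)^* * x t + \sum_t (project g x t)^* * project g x t.
  by rewrite -!sumrB -big_split; apply: eq_bigr => t _; rewrite rmorphB /=; ring.
by rewrite xp px pp; ring.
Qed.

Lemma conj_mul_ge0 (z : C) : 0 <= z^* * z.
Proof. by rewrite mulrC mul_conjC_ge0. Qed.

Lemma effect_projector (I T : finType) (g : I -> T -> R) :
  orthonormal g -> effect (projector g).
Proof.
move=> on; split.
- move=> i j; rewrite rmorph_sum; apply: eq_bigr => c _.
  by rewrite /ketbra /= conj_real mulrC.
- move=> x; rewrite -/(qform _ x) qform_projector.
  by apply: sumr_ge0 => c _; apply: conj_mul_ge0.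
- move=> x; rewrite -/(qform _ x) qform_id_sub_projector //.
  by apply: sumr_ge0 => t _; apply: conj_mul_ge0.
Qed.

Lemma density_ketbra (T : finType) (f : T -> R) :
  dotr f f = 1 -> density (ketbra f).
Proof.
move=> f1; split.
- by move=> i j; rewrite /ketbra conj_real mulrC.
- by move=> x; rewrite -/(qform _ x) qform_ketbra conj_mul_ge0.
- by rewrite -rmorph_sum -/(dotr f f) f1 rmorph1.
Qed.

Lemma tr_prod_projector_ketbra (I T : finType) (g : I -> T -> R) (f : T -> R) :
  tr_prod (projector g) (ketbra f) = (\sum_c dotr (g c) f ^+ 2)%:C.
Proof.
rewrite rmorph_sum /tr_prod.
under eq_bigr do under eq_bigr do rewrite mulr_suml.
under eq_bigr do rewrite exchange_big; rewrite exchange_big.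
apply: eq_bigr => c _; rewrite expr2 /dotr mulr_suml rmorph_sum.
apply: eq_bigr => i _; rewrite mulr_sumr rmorph_sum.
by apply: eq_bigr => j _; rewrite /ketbra -!rmorphM; congr _%:C; ring.
Qed.

Definition tensor (I T : finType) (f : I -> T -> R) (b : {ffun I -> T}) : R :=
  \prod_i f i (b i).

Lemma dotr_tensor (I T : finType) (f g : I -> T -> R) :
  dotr (tensor f) (tensor g) = \prod_i dotr (f i) (g i).
Proof.
rewrite /dotr bigA_distr_bigA /=; apply: eq_bigr => b _.
by rewrite /tensor -big_split.
Qed.

Lemma dotr_comp_bij (T T' : finType) (e : T' -> T) (f g : T -> R) :
  bijective e -> dotr (f \o e) (g \o e) = dotr f g.
Proof. by move=> e_bij; rewrite /dotr (reindex e) //; apply: onW_bij. Qed.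
End RealOperators.

Section Fingerprint.
Variables (R : realType) (k : nat) (K : finType) (F : finFieldType) (amp : R).
Hypothesis amp_norm : amp ^+ 2 * #|F|%:R = 1.

Definition set_poly (S : {set 'I_k}) : {poly F} := \sum_(j in S) 'X^j.

Lemma coef_set_poly S (j : 'I_k) : (set_poly S)`_j = (j \in S)%:R.
Proof.
rewrite coef_sum (eq_bigr (fun i => (i == j)%:R)) => [|i _]; last first.
  by rewrite coefXn eq_sym.
have [jS | njS] := boolP (j \in S).
  by rewrite (bigD1 j) //= eqxx big1 ?addr0 // => i /andP [_ /negbTE ->].
by rewrite big1 // => i iS; case: eqP => // eq_ij; rewrite -eq_ij iS in njS.
Qed.

Definition fingerprint (c : K) (S : {set 'I_k}) (t : K * (F * F)) : R :=
  amp * ((t.1 == c)%:R * (t.2.2 == (set_poly S).[t.2.1])%:R).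

Definition agree (S S' : {set 'I_k}) : nat :=
  #|[pred x : F | (set_poly S).[x] == (set_poly S').[x]]|.

Lemma dotr_fingerprint c S c' S' :
  dotr (fingerprint c S) (fingerprint c' S') =
  amp ^+ 2 * ((c == c')%:R * (agree S S')%:R).
Proof.
set p := set_poly S; set p' := set_poly S'.
have agreeE : (agree S S')%:R = \sum_x \sum_y
    ((y == p.[x])%:R * (y == p'.[x])%:R : R).
  rewrite /agree -sum1_card natr_sum big_mkcond /=.
  by apply: eq_bigr => x _; rewrite sum_indicator_eq inE; case: eqP.
rewrite agreeE pair_bigA -sum_indicator_eq big_distrlr mulr_sumr /=.
under eq_bigr do rewrite mulr_sumr.
rewrite pair_bigA; apply: eq_bigr => t _.
by rewrite /fingerprint; ring.
Qed.

Lemma size_set_poly S : (size (set_poly S) <= k)%N.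
Proof.
apply: leq_trans (size_sum _ _ _) _; apply/bigmax_leqP => j _.
by rewrite size_polyXn.
Qed.

Lemma set_poly_inj : injective set_poly.
Proof.
move=> S S' eqSS'; apply/setP => j.
have := congr1 (fun p : {poly F} => p`_j) eqSS'; rewrite /= !coef_set_poly.
by do 2 case: (_ \in _) => //=; move/eqP; rewrite ?oner_eq0 // eq_sym oner_eq0.
Qed.

Lemma agree_refl S : agree S S = #|F|.
Proof. by apply: eq_card => x; rewrite inE eqxx. Qed.

Lemma agree_lt S S' : S != S' -> (agree S S' < k)%N.
Proof.
move=> neqSS'.
have nz : set_poly S - set_poly S' != 0.
  by rewrite subr_eq0; apply: contra neqSS' => /eqP /set_poly_inj ->.
rewrite /agree cardE; apply: leq_trans (max_poly_roots nz _ (enum_uniq _)) _.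
- by apply/allP => x; rewrite mem_enum inE /root hornerD hornerN subr_eq0.
- apply: leq_trans (size_polyD _ _) _.
  by rewrite size_polyN geq_max !size_set_poly.
Qed.

Lemma dotr_fingerprint_unit c S : dotr (fingerprint c S) (fingerprint c S) = 1.
Proof. by rewrite dotr_fingerprint eqxx agree_refl mul1r. Qed.

Lemma dotr_fingerprint_bound c S S' :
  0 <= dotr (fingerprint c S) (fingerprint c S') <= 1.
Proof.
rewrite dotr_fingerprint eqxx mul1r mulr_ge0 ?sqr_ge0 //=.
by rewrite -[X in _ <= X]amp_norm ler_wpM2l ?sqr_ge0 // ler_nat max_card.
Qed.

Lemma dotr_fingerprint_neq c S S' : (2 * k <= #|F|)%N -> S != S' ->
  dotr (fingerprint c S) (fingerprint c S') <= 2^-1.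
Proof.
move=> HF /agree_lt lt_k; rewrite dotr_fingerprint eqxx mul1r.
have k_le : (agree S S')%:R * 2 <= #|F|%:R :> R.
  rewrite -natrM ler_nat; apply: leq_trans HF.
  by rewrite mulnC leq_pmul2l // ltnW.
have -> : 2^-1 = amp ^+ 2 * (#|F|%:R / 2) :> R by rewrite mulrA amp_norm mul1r.
by rewrite ler_wpM2l ?sqr_ge0 // ler_pdivlMr ?ltr0n.
Qed.
End Fingerprint.

Section Leaders.
Variables (V : finType) (e : rel V).

Definition leader (v : V) (S : {set V}) : V := odflt v [pick u in S].

Lemma leader_in v (S : {set V}) : v \in S -> leader v S \in S.
Proof. by rewrite /leader; case: pickP => [u // | /(_ v) ->]. Qed.

Lemma leader_eq v w (S : {set V}) : v \in S -> w \in S -> leader v S = leader w S.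
Proof. by rewrite /leader; case: pickP => [// | /(_ v) ->]. Qed.

Lemma transitive_of_classes (K : eqType) (c : V -> K) :
  (forall w, [set u | c u == c w] = [set u | e w u]) -> transitive e.
Proof.
move=> cls y x z exy eyz.
have /[!inE] /eqP cyx : y \in [set u | c u == c x] by rewrite cls inE.
have /[!inE] /eqP czy : z \in [set u | c u == c y] by rewrite cls inE.
by have := cls x; move/setP/(_ z); rewrite !inE czy cyx eqxx.
Qed.

Lemma leader_classes : reflexive e -> symmetric e -> transitive e ->
  forall w, [set u | leader u [set x | e u x] == leader w [set x | e w x]] =
            [set u | e w u].
Proof.
move=> refl_e sym_e trans_e w.
have same_nbhd u : e w u -> [set x | e u x] = [set x | e w x].
  move=> ewu; apply/setP => x; rewrite !inE.
  by apply/idP/idP; [apply: trans_e | rewrite sym_e in ewu; apply: trans_e].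
apply/setP => u; rewrite !inE; apply/eqP/idP => [eq_lead | ewu].
  have /[!inE] eul : leader u [set x | e u x] \in [set x | e u x].
    by apply: leader_in; rewrite inE.
  have /[!inE] ewl : leader w [set x | e w x] \in [set x | e w x].
    by apply: leader_in; rewrite inE.
  by rewrite eq_lead in eul; apply: trans_e ewl _; rewrite sym_e.
by rewrite same_nbhd //; apply: leader_eq; rewrite inE.
Qed.
End Leaders.

Section ClosedAdjacency.
Variables (k : nat) (adj : 'I_k -> 'I_k -> bool).
Hypothesis adj_simple : simple_graph adj.

Definition closed_adj (u v : 'I_k) : bool := (u == v) || adj u v.

Lemma closed_adj_refl : reflexive closed_adj.
Proof. by move=> u; rewrite /closed_adj eqxx. Qed.

Lemma closed_adj_sym : symmetric closed_adj.
Proof. by move=> u v; rewrite /closed_adj eq_sym (proj1 adj_simple). Qed.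

Lemma P3_free_closed_adj_trans : ~ has_induced_P3 adj <-> transitive closed_adj.
Proof.
rewrite /closed_adj; split => [noP3 y x z | trans_e [a [b [c [nab nbc nac]]]]].
  have [<- // | nxy /= exy] := eqVneq x y.
  have [<- | nyz /= eyz] := eqVneq y z; first by rewrite exy orbT.
  have [// | nxz /=] := eqVneq x z; apply: contraT => nexz; case: noP3.
  by exists x, y, z; split => //; rewrite exy eyz.
case/and3P => eab ebc neac.
have /orP [/eqP eqac | eac] : (a == c) || adj a c.
  by apply: (trans_e b); rewrite ?eab ?ebc orbT.
- by rewrite eqac eqxx in nac.
- by rewrite eac in neac.
Qed.
End ClosedAdjacency.

Lemma prodr_le_factor (R : numDomainType) (I : finType) (a : I -> R) v :
  (forall i, 0 <= a i <= 1) -> \prod_i a i <= a v.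
Proof.
move=> a01; rewrite (bigD1 v) //= ler_piMr ?prodr_ile1 //.
by case/andP: (a01 v).
Qed.

Section Protocol.
Variables (R : realType) (k q : nat) (K : finType) (F : finFieldType).
Variable enc : 'I_(2 ^ q) -> K * (F * F).
Hypothesis enc_bij : bijective enc.
Variable amp : R.
Hypothesis amp_norm : amp ^+ 2 * #|F|%:R = 1.
Variable label : 'I_k -> K.
Hypothesis label_inj : injective label.
Hypothesis field_large : (2 * k <= #|F|)%N.

Local Notation fp c S := (fingerprint amp c S \o enc).

Definition input_set (v : 'I_k) (nu : {ffun 'I_k -> bool}) : {set 'I_k} :=
  [set u | (v == u) || nu u].

Definition message (v : 'I_k) (nu : {ffun 'I_k -> bool}) : 'I_(2 ^ q) -> R :=
  fp (label (leader v (input_set v nu))) (input_set v nu).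

Definition class (c : {ffun 'I_k -> K}) (w : 'I_k) : {set 'I_k} :=
  [set u | c u == c w].

Definition referee_vec (c : {ffun 'I_k -> K}) : {ffun 'I_k -> 'I_(2 ^ q)} -> R :=
  tensor (fun w => fp (c w) (class c w)).

Definition protocol : qnih_protocol R k :=
  @QNIH R k (fun _ => q) (fun v nu => ketbra (message v nu))
    (projector referee_vec).

Lemma dotr_fp c c' (S S' : {set 'I_k}) :
  dotr (fp c S) (fp c' S') = amp ^+ 2 * ((c == c')%:R * (agree F S S')%:R).
Proof. by rewrite dotr_comp_bij // dotr_fingerprint. Qed.

Lemma dotr_referee_vec (c c0 : {ffun 'I_k -> K}) (S : 'I_k -> {set 'I_k})
    (m : 'I_k -> 'I_(2 ^ q) -> R) :
  (forall w, m w = fp (c0 w) (S w)) ->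
  dotr (referee_vec c) (tensor m) =
  (c == c0)%:R * \prod_w dotr (fp (c0 w) (class c0 w)) (fp (c0 w) (S w)).
Proof.
rewrite dotr_tensor; have [<- mE | neq_c mE] := eqVneq c c0.
  by rewrite mul1r; apply: eq_bigr => w _; rewrite mE.
have [w /negbTE ncw] : exists w, c w != c0 w.
  apply/existsP; apply: contraNT neq_c; rewrite negb_exists => /forallP cE.
  by apply/eqP/ffunP => w; apply/eqP; have := cE w; rewrite negbK.
by rewrite mul0r (bigD1 w) //= mE dotr_fp ncw mul0r mulr0 mul0r.
Qed.

Lemma referee_orthonormal : orthonormal referee_vec.
Proof.
move=> c c'; rewrite (@dotr_referee_vec c c' (class c')) //.
by rewrite big1 ?mulr1 // => w _; rewrite dotr_comp_bij // dotr_fingerprint_unit.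
Qed.

Lemma protocol_valid : qnih_valid protocol.
Proof.
split=> [v nu | ]; last exact: effect_projector referee_orthonormal.
by apply: density_ketbra; rewrite dotr_comp_bij // dotr_fingerprint_unit.
Qed.

Lemma protocol_cost : qnih_cost protocol = (k * q)%N.
Proof. by rewrite /qnih_cost sum_nat_const card_ord. Qed.

Section Run.
Variable adj : 'I_k -> 'I_k -> bool.
Hypothesis adj_simple : simple_graph adj.

Let N w := [set u | closed_adj adj w u].
Let c0 : {ffun 'I_k -> K} := [ffun w => label (leader w (N w))].
Let overlap := \prod_w dotr (fp (c0 w) (class c0 w)) (fp (c0 w) (N w)).

Lemma message_nbhd w : message w (nbhd_vec adj w) = fp (c0 w) (N w).
Proof.
rewrite /message.
have -> : input_set w (nbhd_vec adj w) = N w.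
  by apply/setP => u; rewrite !inE ffunE.
by rewrite /c0 ffunE.
Qed.

Lemma protocol_accept_prob : qnih_accept_prob protocol adj = (overlap ^+ 2)%:C.
Proof.
transitivity (tr_prod (projector referee_vec)
  (ketbra (tensor (fun w => message w (nbhd_vec adj w))))).
  apply: eq_bigr => b _; apply: eq_bigr => b' _; congr (_ * _).
  by rewrite /qnih_joint /ketbra /tensor -rmorph_prod -big_split.
rewrite tr_prod_projector_ketbra (bigD1 c0) //= big1 ?addr0 => [|c neq_c].
  by rewrite (dotr_referee_vec _ message_nbhd) eqxx mul1r.
by rewrite (dotr_referee_vec _ message_nbhd) (negbTE neq_c) mul0r expr2 mul0r.
Qed.

Lemma class_c0 w : class c0 w = [set u | leader u (N u) == leader w (N w)].
Proof. by apply/setP => u; rewrite !inE !ffunE (inj_eq label_inj). Qed.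

Lemma overlap_complete : transitive (closed_adj adj) -> overlap = 1.
Proof.
move=> trans_adj; apply: big1 => w _.
rewrite class_c0 (leader_classes (closed_adj_refl adj)) //.
  by rewrite dotr_comp_bij // dotr_fingerprint_unit.
exact: closed_adj_sym.
Qed.

Lemma overlap_sound : ~ transitive (closed_adj adj) -> 0 <= overlap <= 2^-1.
Proof.
move=> not_trans.
have [w neq_w] : exists w, class c0 w != N w.
  apply/existsP; apply: contraT; rewrite negb_exists => /forallP eq_cls.
  case: not_trans; apply: (transitive_of_classes (c := c0)) => u.
  by apply/eqP; have := eq_cls u; rewrite negbK.
have bound u : 0 <= dotr (fp (c0 u) (class c0 u)) (fp (c0 u) (N u)) <= 1.
  by rewrite dotr_comp_bij // dotr_fingerprint_bound.
rewrite prodr_ge0 => [|u _]; last by case/andP: (bound u).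
apply: le_trans (prodr_le_factor w bound) _.
by rewrite dotr_comp_bij // dotr_fingerprint_neq.
Qed.
End Run.

Lemma protocol_decides : qnih_decides protocol (fun adj => ~ has_induced_P3 adj).
Proof.
move=> adj adj_simple; rewrite protocol_accept_prob.
have two_thirds : 2%:R / 3%:R = (2%:R / 3%:R : R)%:C.
  by rewrite fmorph_div !rmorph_nat.
rewrite two_thirds; split=> [noP3 | P3].
  have trans_adj := proj1 (P3_free_closed_adj_trans adj) noP3.
  by rewrite (overlap_complete adj_simple trans_adj) expr1n lecR; lra.
have not_trans : ~ transitive (closed_adj adj).
  by move/(proj2 (P3_free_closed_adj_trans adj)).
have /andP [ge0 le_half] := overlap_sound not_trans.
by rewrite -(rmorph1 (real_complex R)) -rmorphB lecR; nra.
Qed.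
End Protocol.

Lemma ord_bij_of_card (T : finType) n :
  #|T| = n -> {e : 'I_n -> T | bijective e}.
Proof.
move=> cardT; exists (fun i => enum_val (cast_ord (esym cardT) i)).
apply: (bij_comp (enum_val_bij T)).
by exists (cast_ord cardT) => i; rewrite ?cast_ordK ?cast_ordKV.
Qed.

Theorem mainTheorem6 (R : realType) :
  exists C N : nat, forall k : nat, (N <= k)%N ->
    exists P : qnih_protocol R k,
      [/\ qnih_valid P,
          (qnih_cost P <= C * k * (trunc_log 2 k) ^ 2)%N
        & qnih_decides P (fun adj => ~ has_induced_P3 adj)].
Proof.
exists 10%N, 2%N => k k_ge2.
have L_gt0 : (0 < trunc_log 2 k)%N by rewrite trunc_log_gt0.
set r := (trunc_log 2 k).+1.
have k_lt : (k < 2 ^ r)%N by apply: trunc_log_ltn.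
have [F _ cardF] := @pPrimePowerField 2 (2 * r) (erefl _) (erefl _).
have [enc enc_bij] : {e : 'I_(2 ^ (5 * r)) -> 'I_(2 ^ r) * (F * F) | bijective e}.
  apply: ord_bij_of_card; rewrite !card_prod card_ord cardF -!expnD.
  by congr (2 ^ _)%N; lia.
have label_inj : injective (widen_ord (ltnW k_lt)).
  by move=> i j /(congr1 val) /= /val_inj.
have amp_norm : ((2 ^ r)%:R^-1 : R) ^+ 2 * #|F|%:R = 1.
  have two_r_neq0 : (2 ^ r)%:R != 0 :> R by rewrite pnatr_eq0 expn_eq0.
  by rewrite cardF mul2n -addnn expnD natrM; field.
have field_large : (2 * k <= #|F|)%N.
  have : (0 < 2 ^ trunc_log 2 k)%N by rewrite expn_gt0.
  move: (k_lt); rewrite cardF (mulnC 2 r) expnM /r expnS.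
  set X := (2 ^ trunc_log 2 k)%N; nia.
exists (protocol enc ((2 ^ r)%:R^-1) (widen_ord (ltnW k_lt))); split.
- exact: protocol_valid.
- rewrite protocol_cost /r; move: L_gt0; set L := trunc_log 2 k; nia.
- exact: protocol_decides.
Qed.
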